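(* Let $p$ be a prime number and $n\in\mathbb{N}$, $n\ge 1$. Then there exists a bijection between the set $W_p^n$ and the orbit set $(\mathbb{Z}_p\times\mathbb{Z}_p)^n/\mathrm{SL}(2,\mathbb{Z})$.
   Context: Consider the alphabet of $p^2$ letters $\{0,1,\dots,p^2-1\}$. $W_p^n$ is the set of words $a_1a_2\dots a_n$ of length $n$ over this alphabet consisting of the all-zero word $00\dots0$ together with all words for which there exist integers $j,k$ with $1\le j<k\le n+1$ such that: (R1) $a_i=0$ for $i<j$; (R2) $a_j=1$; (R3) $a_i\in\{0,1,\dots,p-1\}$ for $j<i<k$; (R4) if $k\le n$ then $a_k\in\{p,2p,\dots,(p-1)p\}$; (R5) if $k<n$ then $a_i\in\{0,1,\dots,p^2-1\}$ for $i>k$. The group $\mathrm{SL}(2,\mathbb{Z})$ acts on the left on $(\mathbb{Z}_p\times\mathbb{Z}_p)^n$, whose elements are viewed as $2\times n$ matrices $\binom{u}{v}$ with rows $u,v\in\mathbb{Z}_p^n$, by matrix multiplication with entries reduced modulo $p$; $(\mathbb{Z}_p\times\mathbb{Z}_p)^n/\mathrm{SL}(2,\mathbb{Z})$ denotes the set of orbits of this action. *)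

From HB Require Import structures.
From mathcomp Require Import all_boot all_order all_algebra.
From mathcomp Require Import boolp.
Set Implicit Arguments. Unset Strict Implicit. Unset Printing Implicit Defensive.
Import GRing.Theory.
Local Open Scope ring_scope.

(* Words of length n over the alphabet {0,..,p^2-1}; letter i (0-based) is
   the letter a_{i+1} of the paper. *)
Definition word (p n : nat) := {ffun 'I_n -> 'I_(p ^ 2)}.

(* Membership in W_p^n; indices j,k are 1-based as in the paper. *)
Definition inW (p n : nat) (w : word p n) : bool :=
  [forall i, val (w i) == 0%N] ||
  [exists j : 'I_n.+2, exists k : 'I_n.+2,
     [&& (1 <= j)%N, (j < k)%N,
      [forall i : 'I_n, (i.+1 < j)%N ==> (val (w i) == 0%N)],
      [forall i : 'I_n, (i.+1 == j) ==> (val (w i) == 1%N)],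
      [forall i : 'I_n, ((j < i.+1) && (i.+1 < k))%N ==> (val (w i) < p)%N],
      [forall i : 'I_n, (i.+1 == k) ==>
                  [&& (p %| val (w i))%N, (0 < val (w i))%N & (val (w i) <= (p - 1) * p)%N]] &
      [forall i : 'I_n, (k < i.+1)%N ==> (val (w i) < p ^ 2)%N]]].

Definition W (p n : nat) : {set word p n} := [set w | inW w].

(* (Z_p x Z_p)^n as 2 x n matrices over Z_p (p prime, so 'F_p = Z/pZ). *)
Definition state (p n : nat) := 'M['F_p]_(2, n).

Definition act (p n : nat) (M : 'M[int]_2) (x : state p n) : state p n :=
  map_mx (fun z : int => z%:~R) M *m x.

Definition SL2Z (M : 'M[int]_2) : Prop := \det M = 1.

Definition orbit (p n : nat) (x : state p n) : {set state p n} :=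
  [set y | `[< exists M : 'M[int]_2, SL2Z M /\ act M x = y >]].

Definition orbits (p n : nat) : {set {set state p n}} :=
  [set orbit x | x : state p n].

(* Writing each letter as [a = r + p q] with digits [r, q < p] turns a word into a
   2 x n matrix over F_p whose i-th column is [(r_i, q_i)]; this is a bijection, and
   R1-R5 say exactly that the matrix is reduced: it is zero, or its first nonzero
   column is e1 and the first column where row 1 does not vanish is a multiple of
   e2.  Elementary transvections lift to SL(2,Z), and column-wise Gaussian
   elimination with them reduces every matrix; conversely a matrix of determinant 1
   relating two reduced matrices fixes e1, hence is a transvection (1 s; 0 1), and
   the leading entry of row 1 forces s = 0.  So every orbit contains exactly one
   reduced matrix, i.e. exactly one word of W_p^n. *)

From Pilot Require Import Defs.
From HB Require Import structures.
From mathcomp Require Import all_boot all_order all_algebra.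
From mathcomp Require Import boolp zify.
Set Implicit Arguments. Unset Strict Implicit. Unset Printing Implicit Defensive.
Import GRing.Theory.
Local Open Scope ring_scope.

Variant first_spec n (P : pred 'I_n) : Prop :=
  | FirstNone of (forall i, ~~ P i)
  | FirstSome i of P i & (forall i' : 'I_n, (i' < i)%N -> ~~ P i').

Lemma firstP n (P : pred 'I_n) : first_spec P.
Proof.
case: (pickP P) => [i0 Pi0 | noP]; last by apply: FirstNone => i; rewrite noP.
case: (arg_minnP (P := P) val Pi0) => i Pi imin.
by apply: (FirstSome Pi) => i' lt; apply: contraTN lt => /imin; rewrite -leqNgt.
Qed.

Lemma ord2P (r : 'I_2) : r = 0 \/ r = 1.
Proof. by case: r => [[|[|//]] ?]; [left | right]; apply: val_inj. Qed.

Section TwoRows.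
Variable R : comNzRingType.

Lemma det_mx2 (A : 'M[R]_2) : \det A = A 0 0 * A 1 1 - A 0 1 * A 1 0.
Proof.
rewrite (expand_det_row _ 0) !big_ord_recl big_ord0 addr0 /cofactor !det_mx11.
rewrite /= !mxE /= expr1 mulN1r mulrN expr0 mul1r.
by congr (_ * A _ _ - A _ _ * A _ _); apply: val_inj.
Qed.

Lemma mulmx2E n (A : 'M[R]_2) (y : 'M[R]_(2, n)) r i :
  (A *m y) r i = A r 0 * y 0 i + A r 1 * y 1 i.
Proof.
rewrite mxE !big_ord_recl big_ord0 addr0.
by congr (A r _ * y _ i + A r _ * y _ i); apply: val_inj.
Qed.

Definition transvection01 (t : R) : 'M[R]_2 :=
  \matrix_(r, c) (if (r == 0) && (c == 1) then t else (r == c)%:R).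

Definition transvection10 (t : R) : 'M[R]_2 :=
  \matrix_(r, c) (if (r == 1) && (c == 0) then t else (r == c)%:R).

Lemma det_transvection01 t : \det (transvection01 t) = 1.
Proof. by rewrite det_mx2 !mxE /= mulr1 mulr0 subr0. Qed.

Lemma det_transvection10 t : \det (transvection10 t) = 1.
Proof. by rewrite det_mx2 !mxE /= mulr1 mul0r subr0. Qed.

Lemma transvection01E n t (y : 'M[R]_(2, n)) i :
  (transvection01 t *m y) 0 i = y 0 i + t * y 1 i /\
  (transvection01 t *m y) 1 i = y 1 i.
Proof. by rewrite !mulmx2E !mxE /= !mul1r mul0r add0r. Qed.

Lemma transvection10E n t (y : 'M[R]_(2, n)) i :
  (transvection10 t *m y) 0 i = y 0 i /\
  (transvection10 t *m y) 1 i = y 1 i + t * y 0 i.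
Proof. by rewrite !mulmx2E !mxE /= !mul1r mul0r addr0 addrC. Qed.

Lemma det1_fix_e1 (A : 'M[R]_2) :
  \det A = 1 -> A 0 0 = 1 -> A 1 0 = 0 -> A = transvection01 (A 0 1).
Proof.
move=> dA A00 A10.
have A11 : A 1 1 = 1 by move: dA; rewrite det_mx2 A00 A10 mulr0 subr0 mul1r.
apply/matrixP => r c; rewrite mxE.
by have [->|->] := ord2P r; have [->|->] := ord2P c.
Qed.

End TwoRows.

Lemma map_transvection01 (R S : comNzRingType) (f : {rmorphism R -> S}) t :
  map_mx f (transvection01 t) = transvection01 (f t).
Proof. by apply/matrixP => r c; rewrite !mxE; case: ifP; rewrite ?rmorph_nat. Qed.

Lemma map_transvection10 (R S : comNzRingType) (f : {rmorphism R -> S}) t :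
  map_mx f (transvection10 t) = transvection10 (f t).
Proof. by apply/matrixP => r c; rewrite !mxE; case: ifP; rewrite ?rmorph_nat. Qed.

Section Echelon.
Variables (F : fieldType) (n : nat).
Implicit Types (y u v : 'M[F]_(2, n)) (A : 'M[F]_2).

Definition zero_col y i := (y 0 i == 0) && (y 1 i == 0).

(* The shape of [inW] read on the digit matrix, with the same 1-based [j], [k]:
   column [j] is the first nonzero column and equals e1, row 1 vanishes up to
   column [k], which is a nonzero multiple of e2 ([k = n.+1]: no such column). *)
Definition echelon y : bool :=
  [forall i, zero_col y i] ||
  [exists j : 'I_n.+2, exists k : 'I_n.+2,
     [&& (1 <= j)%N, (j < k)%N,
      [forall i : 'I_n, (i.+1 < j)%N ==> zero_col y i],
      [forall i : 'I_n, (i.+1 == j) ==> (y 0 i == 1) && (y 1 i == 0)],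
      [forall i : 'I_n, ((j < i.+1) && (i.+1 < k))%N ==> (y 1 i == 0)] &
      [forall i : 'I_n, (i.+1 == k) ==> (y 0 i == 0) && (y 1 i != 0)]]].

Definition lead_col_e1 y := forall i : 'I_n,
  (forall i' : 'I_n, (i' < i)%N -> zero_col y i') -> ~~ zero_col y i ->
  y 0 i = 1 /\ y 1 i = 0.

Definition lead_row1_e2 y := forall i : 'I_n,
  (forall i' : 'I_n, (i' < i)%N -> y 1 i' = 0) -> y 1 i != 0 -> y 0 i = 0.

Lemma echelon_lead_col_e1 y : echelon y -> lead_col_e1 y.
Proof.
case/orP => [/forallP zy | /existsP[j /existsP[k /and5P[j1 _ /forallP Hz /forallP He1 _]]]]
  i pre nzi; first by rewrite zy in nzi.
have ilt := ltn_ord i.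
case: (ltngtP i.+1 j) => ij.
- by rewrite (implyP (Hz i) ij) in nzi.
- have lt_jn : (j.-1 < n)%N by lia.
  have lt_ji : (Ordinal lt_jn < i)%N by rewrite /=; lia.
  have at_j : (Ordinal lt_jn).+1 == j by apply/eqP; rewrite /=; lia.
  have /andP[/eqP y0j _] := implyP (He1 _) at_j.
  by move: (pre _ lt_ji); rewrite /zero_col y0j oner_eq0.
- by move: (He1 i); rewrite ij eqxx => /andP[/eqP -> /eqP ->].
Qed.

Lemma echelon_lead_row1_e2 y : echelon y -> lead_row1_e2 y.
Proof.
case/orP => [/forallP zy |
    /existsP[j /existsP[k /and5P[j1 jk /forallP Hz /forallP He1 /andP[/forallP Hr /forallP Hk]]]]]
  i pre nzi; first by case/andP: (zy i) nzi => _ /eqP ->; rewrite eqxx.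
have ilt := ltn_ord i.
case: (ltngtP i.+1 k) => ik.
- suff /eqP y1i : y 1 i == 0 by rewrite y1i eqxx in nzi.
  case: (ltngtP i.+1 j) => ij.
  + by case/andP: (implyP (Hz i) ij).
  + by rewrite (implyP (Hr i)) // ij ik.
  + by move: (He1 i); rewrite ij eqxx => /andP[].
- have lt_kn : (k.-1 < n)%N by lia.
  have lt_ki : (Ordinal lt_kn < i)%N by rewrite /=; lia.
  have at_k : (Ordinal lt_kn).+1 == k by apply/eqP; rewrite /=; lia.
  have /andP[_] := implyP (Hk _) at_k.
  by rewrite pre // eqxx.
- by move: (Hk i); rewrite ik eqxx => /andP[/eqP ->].
Qed.

Definition reduced y := lead_col_e1 y /\ lead_row1_e2 y.

Lemma echelon_reduced y : echelon y -> reduced y.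
Proof. by move=> ey; split; [apply: echelon_lead_col_e1 | apply: echelon_lead_row1_e2]. Qed.

Lemma zero_col_mulmx A y i : A \in unitmx -> zero_col (A *m y) i = zero_col y i.
Proof.
have zero_col_mul B z : zero_col z i -> zero_col (B *m z) i.
  by case/andP=> /eqP z0 /eqP z1; rewrite /zero_col !mulmx2E z0 z1 !mulr0 addr0 eqxx.
move=> Au; apply/idP/idP => [/(zero_col_mul (invmx A)) | /zero_col_mul //].
by rewrite mulKmx.
Qed.

Lemma zero_colsP y : (forall i, zero_col y i) -> y = 0.
Proof.
move=> zy; apply/matrixP => r i; rewrite mxE.
by case/andP: (zy i) => /eqP y0 /eqP y1; have [->|->] := ord2P r.
Qed.

(* [A] fixes the common leading column e1, so it is a transvection [(1 s; 0 1)];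
   comparing the leading entries of row 1 then forces [s = 0]. *)
Lemma reduced_uniq A y y' : \det A = 1 -> A *m y = y' -> reduced y -> reduced y' -> y = y'.
Proof.
move=> dA Ey [P1y P2y] [P1y' P2y'].
have zcE i : zero_col y' i = zero_col y i.
  by rewrite -Ey zero_col_mulmx // unitmxE dA unitr1.
case: (firstP (fun i => ~~ zero_col y i)) => [zy | i nzi pre].
  have zy0 i : zero_col y i by apply/negPn.
  by rewrite (zero_colsP zy0) (@zero_colsP y') // => i; rewrite zcE.
have pre0 (i' : 'I_n) : (i' < i)%N -> zero_col y i' by move/pre/negPn.
have pre0' (i' : 'I_n) : (i' < i)%N -> zero_col y' i' by rewrite zcE; apply: pre0.
have [y0i y1i] := P1y i pre0 nzi.
have nzi' : ~~ zero_col y' i by rewrite zcE.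
have [] := P1y' i pre0' nzi'.
rewrite -{1 2}Ey !mulmx2E y0i y1i !mulr0 !addr0 !mulr1 => A00 A10.
move: Ey; rewrite (det1_fix_e1 dA A00 A10); set s := A 0 1 => Ey.
have row1E l : y' 1 l = y 1 l by rewrite -Ey; case: (transvection01E s y l).
have row0E l : y' 0 l = y 0 l + s * y 1 l by rewrite -Ey; case: (transvection01E s y l).
suff sy l : s * y 1 l = 0.
  by apply/matrixP => r l; have [->|->] := ord2P r; rewrite ?row1E // row0E sy addr0.
case: (firstP (fun l => y 1 l != 0)) => [z1 | m nzm prem].
  by move/negPn/eqP: (z1 l) => ->; rewrite mulr0.
suff -> : s = 0 by rewrite mul0r.
have prem0 (l' : 'I_n) : (l' < m)%N -> y 1 l' = 0 by move/prem/negPn/eqP.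
have prem0' (l' : 'I_n) : (l' < m)%N -> y' 1 l' = 0 by rewrite row1E; apply: prem0.
have nzm' : y' 1 m != 0 by rewrite row1E.
have := P2y' m prem0' nzm'.
rewrite row0E (P2y m prem0 nzm) add0r => /eqP.
by rewrite mulf_eq0 (negbTE nzm) orbF => /eqP.
Qed.

Lemma echelon_intro y (i : 'I_n) (k : nat) :
  (i < k <= n)%N -> (forall i' : 'I_n, (i' < i)%N -> zero_col y i') ->
  y 0 i = 1 -> y 1 i = 0 ->
  (forall i' : 'I_n, (i < i' < k)%N -> y 1 i' = 0) ->
  (forall i' : 'I_n, val i' = k -> y 0 i' = 0 /\ y 1 i' != 0) ->
  echelon y.
Proof.
move=> /andP[ik kn] pre y0i y1i mid last.
apply/orP; right; apply/existsP; exists (Ordinal (ltnW (ltn_ord i) : (i.+1 < n.+2)%N)).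
apply/existsP; exists (Ordinal (kn : (k.+1 < n.+2)%N)) => /=.
rewrite ltnS ik /=; apply/and4P; split.
- by apply/forallP => i'; apply/implyP; apply: pre.
- apply/forallP => i'; apply/implyP => /eqP [/val_inj ->].
  by rewrite y0i y1i !eqxx.
- apply/forallP => i'; apply/implyP => lt; apply/eqP; apply: mid; lia.
- apply/forallP => i'; apply/implyP => /eqP [/last [-> ->]].
  by rewrite eqxx.
Qed.

Lemma unitmx_transvection01 (t : F) : transvection01 t \in unitmx.
Proof. by rewrite unitmxE det_transvection01 unitr1. Qed.

Lemma unitmx_transvection10 (t : F) : transvection10 t \in unitmx.
Proof. by rewrite unitmxE det_transvection10 unitr1. Qed.

Section Reduction.
Variable reach : 'M[F]_(2, n) -> 'M[F]_(2, n) -> Prop.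
Hypothesis reach_refl : forall y, reach y y.
Hypothesis reach_trans : forall y u v, reach y u -> reach u v -> reach y v.
Hypothesis reach01 : forall y t, reach y (transvection01 t *m y).
Hypothesis reach10 : forall y t, reach y (transvection10 t *m y).

Lemma reach_col_e1 y (i : 'I_n) : ~~ zero_col y i ->
  exists2 u, reach y u &
    [/\ forall i', zero_col u i' = zero_col y i', u 0 i = 1 & u 1 i = 0].
Proof.
move=> nzi.
have [z yz [zcE z1i]] : exists2 z, reach y z &
    (forall i', zero_col z i' = zero_col y i') /\ z 1 i != 0.
  case: (eqVneq (y 1 i) 0) => [y1i | ]; last by exists y.
  exists (transvection10 1 *m y) => //; split => [i'|].
    by rewrite zero_col_mulmx // unitmx_transvection10.
  have [_ ->] := transvection10E 1 y i; rewrite y1i add0r mul1r.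
  by move: nzi; rewrite /zero_col y1i eqxx andbT.
have z'0i : (transvection01 ((1 - z 0 i) / z 1 i) *m z) 0 i = 1.
  by case: (transvection01E ((1 - z 0 i) / z 1 i) z i) => -> _; rewrite divfK // addrC subrK.
set z' := transvection01 _ *m z in z'0i *.
exists (transvection10 (- z' 1 i) *m z').
  exact: reach_trans (reach_trans yz (reach01 _ _)) (reach10 _ _).
have [-> ->] := transvection10E (- z' 1 i) z' i.
split=> [i'||] //; last by rewrite z'0i mulr1 subrr.
by rewrite !zero_col_mulmx ?unitmx_transvection01 ?unitmx_transvection10 ?zcE.
Qed.

Lemma reach_echelon_from_e1 u (i : 'I_n) :
  (forall i' : 'I_n, (i' < i)%N -> zero_col u i') -> u 0 i = 1 -> u 1 i = 0 ->
  exists2 v, reach u v & echelon v.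
Proof.
move=> pre u0i u1i.
case: (firstP (fun l => u 1 l != 0)) => [z1 | l nzl prel].
  exists u => //; apply: (@echelon_intro _ i n) => //.
  - by rewrite ltn_ord leqnn.
  - by move=> i' _; apply/eqP/negPn.
  - by move=> i' E; have := ltn_ord i'; rewrite E ltnn.
have il : (i < l)%N.
  case: (ltngtP i l) => // [li | /val_inj li]; last by rewrite -li u1i eqxx in nzl.
  by case/andP: (pre l li) nzl => _ ->.
pose t := - (u 0 l / u 1 l).
exists (transvection01 t *m u); first exact: reach01.
apply: (@echelon_intro _ i l); rewrite ?il ?(ltnW (ltn_ord l)) //.
- by move=> i' /pre; rewrite zero_col_mulmx ?unitmx_transvection01.
- by case: (transvection01E t u i) => -> _; rewrite u1i mulr0 addr0.
- by case: (transvection01E t u i) => _ ->.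
- move=> i' /andP[_ i'l]; case: (transvection01E t u i') => _ ->.
  by apply/eqP/negPn/prel.
- move=> i' /val_inj ->; case: (transvection01E t u l) => -> ->.
  by rewrite mulNr divfK // subrr.
Qed.

Lemma reach_echelon y : exists2 v, reach y v & echelon v.
Proof.
case: (firstP (fun i => ~~ zero_col y i)) => [zy | i nzi pre].
  by exists y => //; apply/orP; left; apply/forallP => i; apply/negPn.
have [u yu [zcE u0i u1i]] := reach_col_e1 nzi.
have [v uv ev] : exists2 v, reach u v & echelon v.
  by apply: (reach_echelon_from_e1 _ u0i u1i) => i' /pre; rewrite zcE => /negPn.
by exists v => //; apply: reach_trans yu uv.
Qed.

End Reduction.
End Echelon.

Section Orbits.
Variables p n : nat.
Implicit Types x y z : state p n.

Lemma actM (M N : 'M[int]_2) x : act M (act N x) = act (M *m N) x.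
Proof. by rewrite /act mulmxA -(map_mxM intr). Qed.

Lemma orbitP x y : reflect (exists M, SL2Z M /\ act M x = y) (y \in Defs.orbit x).
Proof. by rewrite inE; apply: (iffP (asboolP _)). Qed.

Lemma orbit_refl x : x \in Defs.orbit x.
Proof.
apply/orbitP; exists 1%:M; split; first by rewrite /SL2Z det1.
by rewrite /act (map_mx1 intr) mul1mx.
Qed.

Lemma orbit_trans x y z : y \in Defs.orbit x -> z \in Defs.orbit y -> z \in Defs.orbit x.
Proof.
move=> /orbitP[M [dM <-]] /orbitP[N [dN <-]]; apply/orbitP; exists (N *m M).
by rewrite /SL2Z det_mulmx dM dN mulr1 actM.
Qed.

Lemma orbit_sym x y : y \in Defs.orbit x -> x \in Defs.orbit y.
Proof.
move=> /orbitP[M [dM <-]]; apply/orbitP; exists (\adj M); split.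
  by rewrite /SL2Z -(mulr1 (\det (\adj M))) -dM -det_mulmx mul_adj_mx dM det1.
by rewrite actM mul_adj_mx dM /act (map_mx1 intr) mul1mx.
Qed.

Lemma orbit_eq x y : y \in Defs.orbit x -> Defs.orbit x = Defs.orbit y.
Proof.
move=> yx; apply/setP => z; apply/idP/idP => [zx | zy]; last exact: orbit_trans zy.
exact: orbit_trans (orbit_sym yx) zx.
Qed.

End Orbits.

Section Digits.
Variable p : nat.
Hypothesis p_pr : prime p.

Lemma Fp_val_lt (z : 'F_p) : (val z < p)%N.
Proof. by have := ltn_ord z; rewrite [X in (_ < X)%N -> _]Fp_cast. Qed.

Lemma Fp_natr_val (z : 'F_p) : (val z)%:R = z.
Proof. by apply: val_inj; rewrite /= val_Fp_nat // modn_small // Fp_val_lt. Qed.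

Lemma Fp_natr_eq (a b : nat) : (a < p)%N -> (b < p)%N ->
  ((a%:R : 'F_p) == b%:R) = (a == b).
Proof. by move=> ap bp; rewrite -(inj_eq val_inj) /= !val_Fp_nat // !modn_small. Qed.

Lemma orbit_transvection01 n (x : state p n) (t : 'F_p) :
  transvection01 t *m x \in Defs.orbit x.
Proof.
apply/orbitP; exists (transvection01 (val t)%:Z); split; first exact: det_transvection01.
by rewrite /act map_transvection01 -[X in transvection01 X]/((val t)%:R) Fp_natr_val.
Qed.

Lemma orbit_transvection10 n (x : state p n) (t : 'F_p) :
  transvection10 t *m x \in Defs.orbit x.
Proof.
apply/orbitP; exists (transvection10 (val t)%:Z); split; first exact: det_transvection10.
by rewrite /act map_transvection10 -[X in transvection10 X]/((val t)%:R) Fp_natr_val.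
Qed.

Lemma letter_digits (a : 'I_(p ^ 2)) :
  [/\ (a %% p < p)%N, (a %/ p < p)%N &
   [/\ (val a == 0)%N = (a %% p == 0)%N && (a %/ p == 0)%N,
       (val a == 1)%N = (a %% p == 1)%N && (a %/ p == 0)%N,
       (val a < p)%N = (a %/ p == 0)%N &
       [&& p %| a, 0 < a & a <= (p - 1) * p]%N = (a %% p == 0)%N && (a %/ p != 0)%N]].
Proof.
have p1 := prime_gt1 p_pr.
have qp : (a %/ p < p)%N by rewrite ltn_divLR ?mulnn ?prime_gt0.
rewrite ltn_mod ltnW //; split => //.
rewrite /dvdn; move: qp (ltn_pmod a (ltnW p1)) (divn_eq a p).
move: (a %/ p)%N (a %% p)%N => q r qp rp /= ->.
by case: q qp => [|q] qp; rewrite ?mul0n ?add0n; split; nia.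
Qed.

Definition word_mx n (w : word p n) : state p n :=
  \matrix_(r < 2, i < n) (if r == 0 then (w i %% p)%N%:R else (w i %/ p)%N%:R).

Lemma word_mx_inj n : injective (@word_mx n).
Proof.
move=> w1 w2 E; apply/ffunP => i; apply: val_inj.
have [r1 q1 _] := letter_digits (w1 i); have [r2 q2 _] := letter_digits (w2 i).
have /eqP := congr1 (fun m : state p n => m 0 i) E.
have /eqP := congr1 (fun m : state p n => m 1 i) E.
rewrite !mxE /= !Fp_natr_eq // => /eqP Eq /eqP Er.
by rewrite (divn_eq (w1 i) p) (divn_eq (w2 i) p) Eq Er.
Qed.

Lemma word_mx_surj n (x : state p n) : exists w : word p n, word_mx w = x.
Proof.
have p0 := prime_gt0 p_pr.
have lt_p2 (i : 'I_n) : (val (x 0%R i) + val (x 1%R i) * p < p ^ 2)%N.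
  have := Fp_val_lt (x 0 i); have := Fp_val_lt (x 1 i).
  move: (val (x 0 i)) (val (x 1 i)) => a b; rewrite -mulnn; nia.
exists [ffun i => Ordinal (lt_p2 i)]; apply/matrixP => r i; rewrite mxE ffunE /=.
have x0p := Fp_val_lt (x 0 i).
have [->|->] := ord2P r => /=.
  by rewrite addnC modnMDl modn_small // Fp_natr_val.
by rewrite addnC divnMDl // divn_small // addn0 Fp_natr_val.
Qed.

Lemma inW_echelon n (w : word p n) : inW w = echelon (word_mx w).
Proof.
have p0 := prime_gt0 p_pr; have p1 := prime_gt1 p_pr.
have digitsE i := letter_digits (w i).
have E0 i : word_mx w 0 i = (w i %% p)%N%:R by rewrite mxE.
have E1 i : word_mx w 1 i = (w i %/ p)%N%:R by rewrite mxE.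
have col0E i : (word_mx w 0 i == 0) = (w i %% p == 0)%N.
  by have [rp _ _] := digitsE i; rewrite E0 (@Fp_natr_eq _ 0).
have col1E i : (word_mx w 1 i == 0) = (w i %/ p == 0)%N.
  by have [_ qp _] := digitsE i; rewrite E1 (@Fp_natr_eq _ 0).
have col01E i : (word_mx w 0 i == 1) = (w i %% p == 1)%N.
  by have [rp _ _] := digitsE i; rewrite E0 (@Fp_natr_eq _ 1).
rewrite /inW /echelon /zero_col; congr orb.
  by apply: eq_forallb => i; case: (digitsE i) => _ _ [-> _ _ _]; rewrite col0E col1E.
apply: eq_existsb => j; apply: eq_existsb => k.
have -> : [forall i : 'I_n, (k < i.+1)%N ==> (val (w i) < p ^ 2)%N].
  by apply/forallP => i; rewrite ltn_ord implybT.
rewrite andbT; congr [&& _, _, _, _, _ & _]; apply: eq_forallb => i;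
  have [_ _ [val0E val1E val_ltE val_e2E]] := digitsE i.
- by rewrite val0E col0E col1E.
- by rewrite val1E col01E col1E.
- by rewrite val_ltE col1E.
- by rewrite val_e2E col0E col1E.
Qed.

End Digits.

Theorem theorem3p1 (p n : nat) :
  prime p -> (1 <= n)%N ->
  exists f : word p n -> {set state p n},
    {in W p n &, injective f} /\ f @: W p n = orbits p n.
Proof.
move=> p_pr _; exists (fun w => Defs.orbit (word_mx w)); split.
  move=> w1 w2; rewrite !inE !inW_echelon // => e1 e2 E.
  have /orbitP[M [dM]] : word_mx w2 \in Defs.orbit (word_mx w1) by rewrite E orbit_refl.
  rewrite /act => EM.
  apply: (word_mx_inj p_pr).
  apply: (reduced_uniq _ EM (echelon_reduced e1) (echelon_reduced e2)).
  by rewrite (det_map_mx intr) dM rmorph1.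
apply/setP => S; apply/imsetP/imsetP => [[w _ ->] | [x _ ->]]; first by exists (word_mx w).
have [y xy ey] := reach_echelon (@orbit_refl p n) (@orbit_trans p n)
  (@orbit_transvection01 p p_pr n) (@orbit_transvection10 p p_pr n) x.
have [w wy] := word_mx_surj p_pr y.
exists w; last by rewrite wy (orbit_eq xy).
by rewrite inE inW_echelon // wy.
Qed.
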